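(* Let $1\le m\le n-1$, let $A\otimes B\in Y$, and let $\gamma\in\mathrm{GL}_{m(n-m)}(\mathbb{Z})$ be such that $(A\otimes B)\gamma\in Y$. Then $\gamma=\gamma_m\otimes\gamma_{n-m}$ with $\gamma_m\in\mathrm{GL}_m(\mathbb{Z})$ and $\gamma_{n-m}\in\mathrm{GL}_{n-m}(\mathbb{Z})$.
   Context: $Y=\{A\otimes B: A\in\mathrm{Mat}_{n\times m}(\mathbb{R}),B\in\mathrm{Mat}_{n\times(n-m)}(\mathbb{R})$ of full rank, column space of $A$ orthogonal to column space of $B\}$, where $A\otimes B=(a_{ij}B)_{i,j}$ denotes the Kronecker product (an $n^2\times m(n-m)$ matrix); similarly $\gamma_m\otimes\gamma_{n-m}$ is the Kronecker product. *)

From HB Require Import structures.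
From mathcomp Require Import all_boot all_order all_algebra.
From mathcomp Require Import reals.
Set Implicit Arguments. Unset Strict Implicit. Unset Printing Implicit Defensive.
Import Order.TTheory GRing.Theory Num.Theory.
Local Open Scope ring_scope.

(* Row index (i,k) of 'I_m1 * 'I_m2
   is encoded as mxvec_index i k, i.e. lexicographically (value i*m2 + k), so
   kron A B (mxvec_index i k) (mxvec_index j l) = A i j * B k l. *)
Definition kron (R : ringType) m1 n1 m2 n2
    (A : 'M[R]_(m1, n1)) (B : 'M[R]_(m2, n2)) : 'M[R]_(m1 * m2, n1 * n2) :=
  \matrix_(r, c)
    let ik := enum_val (cast_ord (esym (mxvec_cast m1 m2)) r) in
    let jl := enum_val (cast_ord (esym (mxvec_cast n1 n2)) c) in
    A ik.1 jl.1 * B ik.2 jl.2.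

Definition goodpair (R : realType) (n m : nat)
    (A : 'M[R]_(n, m)) (B : 'M[R]_(n, n - m)) : Prop :=
  \rank A = m /\ \rank B = (n - m)%N /\ A^T *m B = 0.

Definition inY (R : realType) (n m : nat) (M : 'M[R]_(n * n, m * (n - m))) : Prop :=
  exists (A : 'M[R]_(n, m)) (B : 'M[R]_(n, n - m)), goodpair A B /\ M = kron A B.

Definition intmx (R : realType) p q (g : 'M[int]_(p, q)) : 'M[R]_(p, q) :=
  map_mx (fun z : int => z%:~R) g.

Lemma kronE (R : ringType) m1 n1 m2 n2 (A : 'M[R]_(m1, n1)) (B : 'M[R]_(m2, n2))
  i k j l : kron A B (mxvec_index i k) (mxvec_index j l) = A i j * B k l.
Proof. by rewrite mxE /mxvec_index !cast_ordK !enum_rankK. Qed.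

From HB Require Import structures.
From mathcomp Require Import all_boot all_order all_algebra.
From mathcomp Require Import reals zify.
Import Order.TTheory GRing.Theory Num.Theory.
Local Open Scope ring_scope.
Set Implicit Arguments. Unset Strict Implicit. Unset Printing Implicit Defensive.

(* Since A and B have full column rank they have left inverses A' and B', so
   (A ⊗ B) γ = C ⊗ D forces γ = (A' C) ⊗ (B' D): the integer matrix γ is a
   Kronecker product over the reals.  The heart of the proof is that an
   integer matrix which is a real Kronecker product is already an integer
   Kronecker product U ⊗ V: all its blocks are proportional to one fixed
   nonzero integer block, and a gcd argument (rank-one integer tensors
   factor over Z) shows the proportionality factors can be chosen integral.
   Applying this to γ and to γ⁻¹ (which is also a real Kronecker product,
   of the inverses of the real factors) gives γ = U ⊗ V and γ⁻¹ = U' ⊗ V',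
   whence (U' U) ⊗ (V' V) = 1, so U and V are invertible over Z. *)

Lemma sum_mxvec (V : nmodType) m n (F : 'I_(m * n) -> V) :
  \sum_(r < m * n) F r = \sum_(i < m) \sum_(j < n) F (mxvec_index i j).
Proof.
rewrite (reindex (uncurry (@mxvec_index m n))) /=; last first.
  exact: (@curry_mxvec_bij m n).
by rewrite pair_big /=; apply: eq_bigr => -[i j].
Qed.

Lemma mxvec_index_eq m n (i j : 'I_m) (k l : 'I_n) :
  (mxvec_index i k == mxvec_index j l) = (i == j) && (k == l).
Proof.
apply/eqP/andP => [h|[/eqP-> /eqP->]] //.
have := congr1 (fun x => enum_val (cast_ord (esym (mxvec_cast m n)) x)) h.
by rewrite /mxvec_index !cast_ordK !enum_rankK => -[-> ->].
Qed.

Section KroneckerAlgebra.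
Variable R : comNzRingType.

Lemma kron_mul m1 n1 m2 n2 p1 p2 (A : 'M[R]_(m1, n1)) (B : 'M[R]_(m2, n2))
    (C : 'M[R]_(n1, p1)) (D : 'M[R]_(n2, p2)) :
  kron A B *m kron C D = kron (A *m C) (B *m D).
Proof.
apply/matrixP => r c; case/mxvec_indexP: r => i k; case/mxvec_indexP: c => j l.
rewrite kronE !mxE sum_mxvec mulr_suml; apply: eq_bigr => a _.
by rewrite mulr_sumr; apply: eq_bigr => b _; rewrite !kronE mulrACA.
Qed.

Lemma kron1 m n : kron (1%:M : 'M[R]_m) (1%:M : 'M[R]_n) = 1%:M.
Proof.
apply/matrixP => r c; case/mxvec_indexP: r => i k; case/mxvec_indexP: c => j l.
rewrite kronE !mxE mxvec_index_eq.
by case: (i == j); case: (k == l); rewrite ?mulr1 ?mulr0.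
Qed.

Lemma kron0l p p' q q' (Y : 'M[R]_(q, q')) : kron (0 : 'M[R]_(p, p')) Y = 0.
Proof.
apply/matrixP => r c; case/mxvec_indexP: r => i k; case/mxvec_indexP: c => j l.
by rewrite kronE !mxE mul0r.
Qed.

Lemma kron0r p p' q q' (X : 'M[R]_(p, p')) : kron X (0 : 'M[R]_(q, q')) = 0.
Proof.
apply/matrixP => r c; case/mxvec_indexP: r => i k; case/mxvec_indexP: c => j l.
by rewrite kronE !mxE mulr0.
Qed.

End KroneckerAlgebra.

Lemma kron_eq0 (R : idomainType) p p' q q' (X : 'M[R]_(p, p')) (Y : 'M[R]_(q, q')) :
  kron X Y = 0 -> X = 0 \/ Y = 0.
Proof.
move=> XY0; have [/eqP|/matrix0Pn [i [j Xij]]] := boolP (X == 0); first by left.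
right; apply/matrixP => k l.
have := congr1 (fun M : 'M[R]_(p * q, p' * q') => M (mxvec_index i k) (mxvec_index j l)) XY0.
by rewrite kronE !mxE => /eqP; rewrite mulf_eq0 (negbTE Xij) => /eqP.
Qed.

Lemma unitmx_neq0 (R : comUnitRingType) N (M : 'M[R]_N) (r : 'I_N) :
  M \in unitmx -> M != 0.
Proof.
move=> u; apply/eqP => M0; have := mulVmx u; rewrite M0 mulmx0 => /matrixP/(_ r r).
by rewrite !mxE eqxx => /eqP; rewrite eq_sym oner_eq0.
Qed.

Section KroneckerUnits.
Variable F : fieldType.

(* If X ⊗ Y is invertible (and the factors have positive size), then so are
   X and Y: a vector v in the left kernel of X yields v ⊗ w in the left
   kernel of X ⊗ Y, for any nonzero w. *)
Lemma kron_left_kernel p q (X : 'M[F]_p) (Y : 'M[F]_q) (v : 'rV[F]_p) (w : 'rV[F]_q) :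
  kron X Y \in unitmx -> (v *m X = 0) \/ (w *m Y = 0) -> v = 0 \/ w = 0.
Proof.
move=> u vw0; apply: kron_eq0.
rewrite -[kron v w](mulmxK u) kron_mul.
by case: vw0 => ->; rewrite ?kron0l ?kron0r mul0mx.
Qed.

Lemma unitmx_kron_l p q (X : 'M[F]_p) (Y : 'M[F]_q) :
  (0 < q)%N -> kron X Y \in unitmx -> X \in unitmx.
Proof.
move=> q0 u; rewrite unitmxE unitfE; apply/negP => /det0P [v vn0 vX].
have := kron_left_kernel (w := const_mx 1) u (or_introl vX).
case=> [/eqP|/matrixP/(_ 0 (Ordinal q0))]; first exact/negP.
by rewrite !mxE; apply/eqP; rewrite oner_eq0.
Qed.

Lemma unitmx_kron_r p q (X : 'M[F]_p) (Y : 'M[F]_q) :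
  (0 < p)%N -> kron X Y \in unitmx -> Y \in unitmx.
Proof.
move=> p0 u; rewrite unitmxE unitfE; apply/negP => /det0P [w wn0 wY].
have := kron_left_kernel (v := const_mx 1) u (or_intror wY).
case=> [/matrixP/(_ 0 (Ordinal p0))|/eqP]; last exact/negP.
by rewrite !mxE; apply/eqP; rewrite oner_eq0.
Qed.

End KroneckerUnits.

(* If S ⊗ T = 1 then S and T are invertible, over any commutative ring: the
   entries give S * T_kk = 1. *)
Lemma kron_eq1 (R : comUnitRingType) p q (S : 'M[R]_p) (T : 'M[R]_q)
    (i0 : 'I_p) (k0 : 'I_q) :
  kron S T = 1%:M -> S \in unitmx /\ T \in unitmx.
Proof.
move=> E.
have EE i j k l : S i j * T k l = ((i == j) && (k == l))%:R.
  have := congr1 (fun M : 'M[R]_(p * q) => M (mxvec_index i k) (mxvec_index j l)) E.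
  by rewrite kronE mxE mxvec_index_eq.
split.
- have : S *m (T k0 k0)%:M = 1%:M.
    by apply/matrixP => i j; rewrite mul_mx_scalar !mxE mulrC EE eqxx andbT.
  by case/mulmx1_unit.
- have : T *m (S i0 i0)%:M = 1%:M.
    by apply/matrixP => k l; rewrite mul_mx_scalar !mxE EE eqxx.
  by case/mulmx1_unit.
Qed.

(* Rank-one integer tensors factor over Z: if f_i h_j = c γ_ij with c ≠ 0 and
   f ≠ 0, then γ_ij = u_i v_j with u = f / gcd(f) and v = gcd(f) h / c; the
   division by c is exact because c divides every f_i h_j. *)
Lemma int_rank_one_factor (I J : finType) (f : I -> int) (h : J -> int)
    (gam : I -> J -> int) (c : int) :
  c != 0 -> (exists i, f i != 0) -> (forall i j, f i * h j = c * gam i j) ->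
  exists (u : I -> int) (v : J -> int), forall i j, u i * v j = gam i j.
Proof.
move=> c0 [i0 fi0] E.
pose g := \big[gcdn/0%N]_(i : I) `|f i|%N.
have g_dvd i : (g %| `|f i|)%N by rewrite /g (bigD1 i) //= dvdn_gcdl.
have g0 : g != 0%N.
  apply: contraNneq fi0 => g0; have := g_dvd i0.
  by rewrite g0 dvd0n absz_eq0.
have c_dvd j : (c %| g%:Z * h j)%Z.
  rewrite dvdzE abszM /= /g.
  apply: (big_ind (fun y => `|c| %| y * `|h j|)%N) => [|x y hx hy|i _].
  - by rewrite mul0n dvdn0.
  - by rewrite muln_gcdl dvdn_gcd hx hy.
  - have /(congr1 (fun z : int => `|z|%N)) := E i j.
    by rewrite !abszM => ->; rewrite dvdn_mulr.
exists (fun i => (f i %/ g%:Z)%Z), (fun j => ((g%:Z * h j) %/ c)%Z) => i j.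
have ef : f i = (f i %/ g%:Z)%Z * g%:Z by rewrite divzK // dvdzE.
have eh : g%:Z * h j = ((g%:Z * h j) %/ c)%Z * c by rewrite divzK.
apply: (@mulIf _ (g%:Z * c)); first by rewrite mulf_neq0.
by rewrite mulrACA -ef -eh mulrCA E mulrA mulrC.
Qed.

Lemma intmxE (R : realType) p q (g : 'M[int]_(p, q)) i j : intmx R g i j = (g i j)%:~R.
Proof. by rewrite mxE. Qed.

Lemma intmx_kron (R : realType) p p' q q' (X : 'M[int]_(p, p')) (Y : 'M[int]_(q, q')) :
  intmx R (kron X Y) = kron (intmx R X) (intmx R Y).
Proof.
apply/matrixP => r c; case/mxvec_indexP: r => i k; case/mxvec_indexP: c => j l.
by rewrite kronE !intmxE kronE intrM.
Qed.

(* Fixing a nonzero entry at block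
   position (k0, l0) and inner position (i0, j0), the real identity
   γ[(i,k),(j,l)] = P_ij Q_kl yields the rank-one relation
   γ[(i,k0),(j,l0)] γ[(i0,k),(j0,l)] = γ[(i0,k0),(j0,l0)] γ[(i,k),(j,l)]. *)
Lemma int_kron_factor (R : realType) p p' q q' (gam : 'M[int]_(p * q, p' * q'))
    (P : 'M[R]_(p, p')) (Q : 'M[R]_(q, q')) :
  gam != 0 -> intmx R gam = kron P Q ->
  exists (U : 'M[int]_(p, p')) (V : 'M[int]_(q, q')), gam = kron U V.
Proof.
move=> /matrix0Pn [r [c]]; case/mxvec_indexP: r => i0 k0; case/mxvec_indexP: c => j0 l0.
move=> gam0 E.
have ER i k j l : (gam (mxvec_index i k) (mxvec_index j l))%:~R = P i j * Q k l :> R.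
  by rewrite -intmxE E kronE.
pose G (x : 'I_p * 'I_p') (y : 'I_q * 'I_q') :=
  gam (mxvec_index x.1 y.1) (mxvec_index x.2 y.2).
have [u [v uv]] : exists (u : 'I_p * 'I_p' -> int) (v : 'I_q * 'I_q' -> int),
    forall x y, u x * v y = G x y.
  apply: (@int_rank_one_factor _ _ (G ^~ (k0, l0)) (G (i0, j0)) G _ gam0).
    by exists (i0, j0).
  move=> [i j] [k l]; apply/eqP; rewrite -(eqr_int R) !intrM /G /= !ER.
  by apply/eqP; rewrite mulrACA [in RHS]mulrACA [P i0 j0 * _]mulrC.
exists (\matrix_(i, j) u (i, j)), (\matrix_(k, l) v (k, l)).
apply/matrixP => r c; case/mxvec_indexP: r => i k; case/mxvec_indexP: c => j l.
by rewrite kronE !mxE uv.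
Qed.

(* A unimodular integer matrix that is a real Kronecker product is a
   Kronecker product of unimodular integer matrices: factor both γ and γ⁻¹
   with int_kron_factor and compare with the identity. *)
Lemma unimodular_kron_factor (R : realType) p q (gam : 'M[int]_(p * q))
    (P : 'M[R]_p) (Q : 'M[R]_q) :
  (0 < p)%N -> (0 < q)%N -> gam \in unitmx -> intmx R gam = kron P Q ->
  exists (U : 'M[int]_p) (V : 'M[int]_q),
    [/\ U \in unitmx, V \in unitmx & gam = kron U V].
Proof.
move=> p0 q0 ugam EPQ.
pose i0 := Ordinal p0; pose k0 := Ordinal q0.
have [U [V EUV]] := int_kron_factor (unitmx_neq0 (mxvec_index i0 k0) ugam) EPQ.
have uR : intmx R gam \in unitmx.
  have : intmx R gam *m intmx R (invmx gam) = 1%:M.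
    by rewrite -map_mxM mulmxV // map_mx1.
  by case/mulmx1_unit.
have EUVR : intmx R gam = kron (intmx R U) (intmx R V) by rewrite EUV intmx_kron.
have uU : intmx R U \in unitmx by apply: (unitmx_kron_l (Y := intmx R V) q0); rewrite -EUVR.
have uV : intmx R V \in unitmx by apply: (unitmx_kron_r (X := intmx R U) p0); rewrite -EUVR.
have Einv : intmx R (invmx gam) = kron (invmx (intmx R U)) (invmx (intmx R V)).
  have inv_l : kron (invmx (intmx R U)) (invmx (intmx R V)) *m intmx R gam = 1%:M.
    by rewrite EUVR kron_mul !mulVmx // kron1.
  by rewrite -[LHS]mul1mx -inv_l -mulmxA -map_mxM mulmxV // map_mx1 mulmx1.
have inv0 : invmx gam != 0.
  by apply: (unitmx_neq0 (mxvec_index i0 k0)); rewrite unitmx_inv.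
have [U' [V' EUV']] := int_kron_factor inv0 Einv.
have E1 : kron (U' *m U) (V' *m V) = 1%:M by rewrite -kron_mul -EUV' -EUV mulVmx.
have [] := kron_eq1 i0 k0 E1; rewrite !unitmx_mul => /andP[_ uU'] /andP[_ uV'].
by exists U, V.
Qed.

Theorem mainTheorem11 (R : realType) (n m : nat) (hm1 : (1 <= m)%N) (hm2 : (m <= n - 1)%N)
  (A : 'M[R]_(n, m)) (B : 'M[R]_(n, n - m)) (hAB : goodpair A B)
  (gamma : 'M[int]_(m * (n - m))) (hgamma : gamma \in unitmx)
  (hY : inY (kron A B *m intmx R gamma)) :
  exists (gm : 'M[int]_m) (gnm : 'M[int]_(n - m)),
    [/\ gm \in unitmx, gnm \in unitmx & gamma = kron gm gnm].
Proof.
case: hAB => rankA [rankB _].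
have [A' A'A] : exists A' : 'M[R]_(m, n), A' *m A = 1%:M.
  by apply/row_fullP; rewrite /row_full rankA.
have [B' B'B] : exists B' : 'M[R]_(n - m, n), B' *m B = 1%:M.
  by apply/row_fullP; rewrite /row_full rankB.
case: hY => C [D [_ EY]].
have Egamma : intmx R gamma = kron (A' *m C) (B' *m D).
  by rewrite -kron_mul -EY mulmxA kron_mul A'A B'B kron1 mul1mx.
apply: (unimodular_kron_factor _ _ hgamma Egamma) => //; lia.
Qed.
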